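(* Let $G$ be an abelian group and let $H$ be a uniformly fully inert subgroup of $G$. Then $H$ is commensurable with some fully invariant subgroup of $G$.
   Context: All groups are additively written abelian groups. A subgroup $F$ of $G$ is fully invariant if $\phi(F)\subseteq F$ for every endomorphism $\phi$ of $G$. A subgroup $S$ of $G$ is uniformly fully inert if there is a fixed positive integer $m$ such that the quotient $(\phi(S)+S)/S$ has at most $m$ elements for every endomorphism $\phi$ of $G$. Two subgroups $B,C$ of $G$ are commensurable if both $(B+C)/B$ and $(B+C)/C$ are finite. *)

From HB Require Import structures.
From mathcomp Require Import all_boot all_order all_algebra.
Set Implicit Arguments. Unset Strict Implicit. Unset Printing Implicit Defensive.
Import GRing.Theory.
Local Open Scope ring_scope.

Definition is_subgroup (G : zmodType) (S : G -> Prop) : Prop :=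
  S 0 /\ (forall x y, S x -> S y -> S (x - y)).

Definition sumset (G : zmodType) (A B : G -> Prop) : G -> Prop :=
  fun x => exists a b, A a /\ B b /\ x = a + b.

Definition imageset (G : zmodType) (phi : G -> G) (A : G -> Prop) : G -> Prop :=
  fun x => exists a, A a /\ x = phi a.

(* The quotient A/B (B a subgroup, B ⊆ A) has at most m elements:
   at most m elements of G represent every coset x + B with x in A. *)
Definition quot_card_le (G : zmodType) (A B : G -> Prop) (m : nat) : Prop :=
  exists s : seq G, (size s <= m)%N /\
    forall x, A x -> exists y, y \in s /\ B (x - y).

Definition quot_finite (G : zmodType) (A B : G -> Prop) : Prop :=
  exists m, quot_card_le A B m.

Definition fully_invariant (G : zmodType) (F : G -> Prop) : Prop :=
  forall (phi : {additive G -> G}) x, F x -> F (phi x).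

Definition uniformly_fully_inert (G : zmodType) (S : G -> Prop) : Prop :=
  exists m : nat, (0 < m)%N /\
    forall phi : {additive G -> G},
      quot_card_le (sumset (imageset phi S) S) S m.

Definition commensurable (G : zmodType) (B C : G -> Prop) : Prop :=
  quot_finite (sumset B C) B /\ quot_finite (sumset B C) C.

From HB Require Import structures.
From mathcomp Require Import all_boot all_order all_algebra.
From Stdlib Require Import Classical.
Set Implicit Arguments. Unset Strict Implicit. Unset Printing Implicit Defensive.
Import GRing.Theory.
Local Open Scope ring_scope.

(* Call (X, W) k-bounded if every endomorphism u maps X into at most k cosets
   of W.  If every u maps X into W we are done.  Otherwise fix u0
   with u0 X not inside W and pass to X0 = X ∩ u0⁻¹ W and W0 = u0 X + W, which
   differ from X and W by at most k cosets.  The pair (X0, W0) is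
   (k-1)-bounded: if g X0 met k cosets of W0, with representatives Z, then
   k-boundedness applied to u0 + g and to g (both congruent to g mod W on X0)
   puts (u0 + g) c and g c, for any c in X, into W-cosets of elements of Z.
   Thus u0 c is congruent mod W to a difference of two elements of Z; that
   difference then lies in W0, so the two elements coincide and u0 c lies in W.
   For a uniformly fully inert H this yields X' ⊆ H ⊆ W' with finite indices
   and u X' ⊆ W' for all u; the largest fully invariant subgroup of W' then
   lies between X' and W', hence is commensurable with H. *)

Section Subgroups.
Variable G : zmodType.
Implicit Types (A B W X : G -> Prop) (x y z : G).

Lemma subgroup0 W : is_subgroup W -> W 0.
Proof. by case. Qed.

Lemma subgroupB W x y : is_subgroup W -> W x -> W y -> W (x - y).
Proof. by case=> _; apply. Qed.

Lemma subgroupN W x : is_subgroup W -> W x -> W (- x).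
Proof. by move=> hW Wx; rewrite -sub0r; apply: subgroupB => //; apply: subgroup0. Qed.

Lemma subgroupD W x y : is_subgroup W -> W x -> W y -> W (x + y).
Proof. by move=> hW Wx Wy; rewrite -[y]opprK; apply: subgroupB (subgroupN _ _). Qed.

Lemma subgroup_subC W x y : is_subgroup W -> W (x - y) -> W (y - x).
Proof. by move=> hW Wxy; rewrite -opprB; apply: subgroupN. Qed.

Lemma subgroup_sub_trans W x y z :
  is_subgroup W -> W (x - y) -> W (y - z) -> W (x - z).
Proof. by move=> hW Wxy Wyz; rewrite -[x](subrK y) -addrA; apply: subgroupD. Qed.

Lemma subgroup_image W (u : {additive G -> G}) :
  is_subgroup W -> is_subgroup (imageset u W).
Proof.
move=> hW; split; first by exists 0; rewrite raddf0; split => //; apply: subgroup0.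
move=> _ _ [x [Wx ->]] [y [Wy ->]].
by exists (x - y); rewrite raddfB; split => //; apply: subgroupB.
Qed.

Lemma subgroup_sumset A B : is_subgroup A -> is_subgroup B -> is_subgroup (sumset A B).
Proof.
move=> hA hB; split; first by exists 0, 0; rewrite addr0; do !split; apply: subgroup0.
move=> _ _ [a [b [Aa [Bb ->]]]] [a' [b' [Aa' [Bb' ->]]]].
exists (a - a'), (b - b'); split; first exact: subgroupB.
split; first exact: subgroupB.
by rewrite opprD addrACA.
Qed.

Lemma sumset_subl A B x : is_subgroup B -> A x -> sumset A B x.
Proof. by move=> hB Ax; exists x, 0; rewrite addr0; do !split => //; apply: subgroup0. Qed.

Lemma sumset_subr A B x : is_subgroup A -> B x -> sumset A B x.
Proof. by move=> hA Bx; exists 0, x; rewrite add0r; do !split => //; apply: subgroup0. Qed.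

Lemma subgroup_preim X W (u : {additive G -> G}) :
  is_subgroup X -> is_subgroup W -> is_subgroup (fun x => X x /\ W (u x)).
Proof.
move=> hX hW; split; first by rewrite raddf0; split; apply: subgroup0.
by move=> x y [Xx Wx] [Xy Wy]; rewrite raddfB; split; apply: subgroupB.
Qed.

End Subgroups.

Section QuotientBounds.
Variable G : zmodType.
Implicit Types (A B C W X : G -> Prop) (L s : seq G).

Lemma quot_card_le1 A B : is_subgroup B -> (forall x, A x -> B x) -> quot_card_le A B 1.
Proof.
move=> hB sAB; exists [:: 0]; split => // x Ax.
by exists 0; rewrite inE subr0; split => //; apply: sAB.
Qed.

Lemma quot_card_le_leq A B k k' : (k <= k')%N -> quot_card_le A B k -> quot_card_le A B k'.
Proof. by move=> lekk' [s [les cov]]; exists s; split => //; apply: leq_trans lekk'. Qed.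

Lemma quot_card_le_subl A A' B k :
  (forall x, A x -> A' x) -> quot_card_le A' B k -> quot_card_le A B k.
Proof. by move=> sAA' [s [les cov]]; exists s; split => // x /sAA' /cov. Qed.

Lemma quot_card_le_subr A B B' k :
  (forall x, B x -> B' x) -> quot_card_le A B k -> quot_card_le A B' k.
Proof.
move=> sBB' [s [les cov]]; exists s; split => // x /cov [y [ys Bxy]].
by exists y; split => //; apply: sBB'.
Qed.

Lemma quot_card_le_trans A B C k1 k2 :
  quot_card_le A B k1 -> quot_card_le B C k2 -> quot_card_le A C (k1 * k2).
Proof.
move=> [s1 [les1 cov1]] [s2 [les2 cov2]].
exists [seq y + z | y <- s1, z <- s2]; split; first by rewrite size_allpairs leq_mul.
move=> x /cov1 [y [ys /cov2 [z [zs Cxyz]]]].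
by exists (y + z); rewrite opprD addrA; split => //; apply: allpairs_f.
Qed.

Lemma quot_finite_trans A B C : quot_finite A B -> quot_finite B C -> quot_finite A C.
Proof. by move=> [k1 qAB] [k2 qBC]; exists (k1 * k2)%N; apply: quot_card_le_trans qBC. Qed.

Lemma quot_card_le_addr A B k :
  is_subgroup B -> quot_card_le A B k -> quot_card_le (sumset A B) B k.
Proof.
move=> hB [s [les cov]]; exists s; split => // _ [a [b [Aa [Bb ->]]]].
have [y [ys Bay]] := cov a Aa.
by exists y; rewrite addrAC; split => //; apply: subgroupD.
Qed.

Definition incongruent W L : Prop :=
  forall i j, (i < size L)%N -> (j < size L)%N -> W (L`_i - L`_j) -> i = j.

Lemma incongruent_sub W W' L :
  (forall x, W x -> W' x) -> incongruent W' L -> incongruent W L.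
Proof. by move=> sWW' incL i j ltiL ltjL /sWW'; apply: incL. Qed.

Lemma incongruent_cons W x L : is_subgroup W -> incongruent W L ->
  (forall i, (i < size L)%N -> ~ W (x - L`_i)) -> incongruent W (x :: L).
Proof.
move=> hW incL newx [|i] [|j] //= ltiL ltjL.
- by move/newx.
- by move/(subgroup_subC hW)/newx.
- by move=> Wij; congr S; apply: incL.
Qed.

Lemma incongruent_size_le W A L k : is_subgroup W -> quot_card_le A W k ->
  (forall x, x \in L -> A x) -> incongruent W L -> (size L <= k)%N.
Proof.
move=> hW [s [les cov]] LA incL; apply: leq_trans les.
have /fin_all_exists [f Wf] : forall i : 'I_(size L),
    exists j : 'I_(size s), W (L`_i - s`_j).
  move=> i; have [y [ys Wy]] := cov _ (LA _ (mem_nth 0 (ltn_ord i))).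
  by exists (Ordinal (etrans (index_mem y s) ys)); rewrite /= nth_index.
have inj_f : injective f.
  move=> i j fij; apply: val_inj; apply: incL (ltn_ord i) (ltn_ord j) _.
  by apply: (subgroup_sub_trans hW (Wf i)); rewrite fij; apply: subgroup_subC.
by have := leq_card f inj_f; rewrite !card_ord.
Qed.

Lemma incongruent_extend W A L : is_subgroup W -> incongruent W L ->
  quot_card_le A W (size L) \/ exists x, A x /\ incongruent W (x :: L).
Proof.
move=> hW incL.
case: (classic (forall x, A x -> exists y, y \in L /\ W (x - y))) => [covL|].
  by left; exists L.
move=> /not_all_ex_not [x notcovx]; have [Ax notcov] := imply_to_and _ _ notcovx.
right; exists x; split => //; apply: incongruent_cons => // i ltiL Wxi.
by apply: notcov; exists L`_i; rewrite mem_nth.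
Qed.

Lemma quot_card_le_or_incongruent W A k : is_subgroup W ->
  quot_card_le A W k \/
  exists L, [/\ size L = k.+1, forall x, x \in L -> A x & incongruent W L].
Proof.
move=> hW; elim: k => [|k [qk|[L [sizeL LA incL]]]].
- have inc0 : incongruent W [::] by move=> i j; rewrite ltn0.
  have [q0|[x [Ax incx]]] := incongruent_extend A hW inc0; first by left.
  by right; exists [:: x]; split => // y; rewrite inE => /eqP ->.
- by left; apply: quot_card_le_leq qk.
- have [qL|[x [Ax incxL]]] := incongruent_extend A hW incL; first by left; rewrite -sizeL.
  right; exists (x :: L); split; [by rewrite /= sizeL | | by []].
  by move=> y; rewrite inE => /predU1P [->|/LA].
Qed.

Lemma quot_card_leP W A k : is_subgroup W -> quot_card_le A W k <->
  ~ exists L, [/\ size L = k.+1, forall x, x \in L -> A x & incongruent W L].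
Proof.
move=> hW; split=> [qk [L [sizeL LA incL]]|noL].
  by have := incongruent_size_le hW qk LA incL; rewrite sizeL ltnn.
by have [//|/noL] := quot_card_le_or_incongruent A k hW.
Qed.

Lemma quot_card_le_preim X W (u : {additive G -> G}) k :
  is_subgroup X -> is_subgroup W ->
  quot_card_le (imageset u X) W k -> quot_card_le X (fun x => X x /\ W (u x)) k.
Proof.
move=> hX hW quX; apply/quot_card_leP; first exact: subgroup_preim.
move=> [L [sizeL LX incL]].
suff : (size (map u L) <= k)%N by rewrite size_map sizeL ltnn.
apply: (incongruent_size_le hW quX).
  by move=> _ /mapP [x xL ->]; exists x; split => //; apply: LX.
move=> i j; rewrite size_map => ltiL ltjL; rewrite !(nth_map 0) // -raddfB => Wij.
have [Xi Xj] := (LX _ (mem_nth 0 ltiL), LX _ (mem_nth 0 ltjL)).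
by apply: incL => //; split => //; apply: subgroupB.
Qed.

End QuotientBounds.

Definition bounded_images (G : zmodType) (X W : G -> Prop) (k : nat) : Prop :=
  forall u : {additive G -> G}, quot_card_le (imageset u X) W k.

Section ReductionStep.
Variables (G : zmodType) (X W : G -> Prop) (u0 : {additive G -> G}) (k : nat).
Hypotheses (hX : is_subgroup X) (hW : is_subgroup W) (hXW : bounded_images X W k.+1).

Let X0 := fun x => X x /\ W (u0 x).
Let W0 := sumset (imageset u0 X) W.

Lemma congruent_images_cover (g v : {additive G -> G}) (Z : seq G) :
  size Z = k.+1 -> (forall z, z \in Z -> imageset g X0 z) -> incongruent W0 Z ->
  (forall x, X0 x -> W (v x - g x)) ->
  forall c, X c -> exists2 i, (i < size Z)%N & W (v c - Z`_i).
Proof.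
move=> sizeZ ZgX0 incZ Wvg c Xc; apply: NNPP => notcov.
have inc_vcZ : incongruent W (v c :: Z).
  have incWZ : incongruent W Z.
    by apply: incongruent_sub incZ => y; apply/sumset_subr/subgroup_image.
  apply: (incongruent_cons hW incWZ) => i ltiZ Wi.
  by apply: notcov; exists i.
suff : (size (v c :: Z) <= k.+1)%N by rewrite /= sizeZ ltnn.
apply: (incongruent_size_le hW (quot_card_le_addr hW (hXW v))) inc_vcZ.
move=> y; rewrite inE => /predU1P [->|/ZgX0 [a [[Xa Wa] ->]]].
  by apply: sumset_subl => //; exists c.
exists (v a), (g a - v a); do !split; first by exists a.
  by apply: subgroup_subC hW _; apply: Wvg.
by rewrite addrC subrK.
Qed.

Lemma bounded_images_reduce :
  (exists2 c, X c & ~ W (u0 c)) -> bounded_images X0 W0 k.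
Proof.
move=> [c Xc notWc] g; apply/quot_card_leP.
  by apply: subgroup_sumset => //; apply: subgroup_image.
move=> [Z [sizeZ ZgX0 incZ]]; apply: notWc.
have cover := congruent_images_cover sizeZ ZgX0 incZ.
have [i ltiZ Wi] : exists2 i, (i < size Z)%N & W ((u0 \+ g) c - Z`_i).
  by apply: cover Xc => x [_ Wx] /=; rewrite addrK.
have [j ltjZ Wj] : exists2 j, (j < size Z)%N & W (g c - Z`_j).
  by apply: cover Xc => x _; rewrite subrr; apply: subgroup0.
have Wcij : W (u0 c - (Z`_i - Z`_j)).
  have := subgroupB hW Wi Wj; congr W => /=.
  by rewrite !opprB !addrA [_ + g c - _]addrAC addrAC addrK addrAC.
have eq_ij : i = j.
  apply: incZ => //; exists (u0 c), (Z`_i - Z`_j - u0 c).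
  split; first by exists c.
  by split; [rewrite -opprB; apply: subgroupN | rewrite [RHS]addrC subrK].
by move: Wcij; rewrite eq_ij subrr subr0.
Qed.

End ReductionStep.

Section AlmostMappedInto.
Variable G : zmodType.
Implicit Types (X W : G -> Prop).

Definition almost_mapped_into X W : Prop :=
  exists X' W' : G -> Prop,
    [/\ is_subgroup X', forall x, X' x -> X x & quot_finite X X'] /\
    [/\ is_subgroup W', forall x, W x -> W' x & quot_finite W' W] /\
    forall (u : {additive G -> G}) x, X' x -> W' (u x).

Lemma almost_mapped_into_refine X W X0 W0 :
  (forall x, X0 x -> X x) -> quot_finite X X0 ->
  (forall x, W x -> W0 x) -> quot_finite W0 W ->
  almost_mapped_into X0 W0 -> almost_mapped_into X W.
Proof.
move=> sX0X qXX0 sWW0 qW0W [X' [W' [[hX' sX'X0 qX0X'] [[hW' sW0W' qW'W0] mapX']]]].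
exists X', W'; split.
  by split=> [//|x /sX'X0 /sX0X //|]; apply: quot_finite_trans qX0X'.
by split=> //; split=> [//|x /sWW0 /sW0W' //|]; apply: quot_finite_trans qW0W.
Qed.

Lemma bounded_images_almost_mapped_into X W k :
  is_subgroup X -> is_subgroup W -> bounded_images X W k -> almost_mapped_into X W.
Proof.
elim: k X W => [|k IHk] X W hX hW hXW.
  have [s [les cov]] := hXW idfun.
  have [y [ys _]] := cov 0 (ex_intro _ 0 (conj (subgroup0 hX) erefl)).
  by move: ys les; case: s {cov}.
case: (classic (forall (u : {additive G -> G}) x, X x -> W (u x))) => [mapX|].
  by exists X, W; do !split => //; exists 1%N; apply: quot_card_le1.
move=> /not_all_ex_not [u0 /not_all_ex_not [c notmapc]].
have [Xc notWc] := imply_to_and _ _ notmapc.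
apply: (almost_mapped_into_refine (X0 := fun x => X x /\ W (u0 x))
                                  (W0 := sumset (imageset u0 X) W)).
- by move=> x [].
- by exists k.+1; apply: quot_card_le_preim.
- by move=> y; apply/sumset_subr/subgroup_image.
- by exists k.+1; apply: quot_card_le_addr.
apply: IHk; first exact: subgroup_preim.
  by apply: subgroup_sumset => //; apply: subgroup_image.
by apply: bounded_images_reduce => //; exists c.
Qed.

End AlmostMappedInto.

Section EndoCore.
Variable G : zmodType.
Implicit Types (W : G -> Prop).

Definition endo_core W : G -> Prop := fun y => forall u : {additive G -> G}, W (u y).

Lemma subgroup_endo_core W : is_subgroup W -> is_subgroup (endo_core W).
Proof.
move=> hW; split; first by move=> u; rewrite raddf0; apply: subgroup0.
by move=> x y Fx Fy u; rewrite raddfB; apply: subgroupB.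
Qed.

Lemma fully_invariant_endo_core W : fully_invariant (endo_core W).
Proof. by move=> phi x Fx u; apply: (Fx (u \o phi)). Qed.

Lemma endo_core_sub W x : endo_core W x -> W x.
Proof. exact: (@^~ idfun). Qed.

End EndoCore.

Theorem theorem2p4 (G : zmodType) (H : G -> Prop)
  (hH : is_subgroup H) (hU : uniformly_fully_inert H) :
  exists F : G -> Prop, is_subgroup F /\ fully_invariant F /\ commensurable H F.
Proof.
have [m [_ bound_m]] := hU.
have boundH : bounded_images H H m.
  by move=> u; apply: quot_card_le_subl (bound_m u) => y; apply: sumset_subl.
have [X' [W' [[_ sX'H [k qHX']] [[hW' sHW' [l qW'H]] mapX']]]] :=
  bounded_images_almost_mapped_into hH hH boundH.
exists (endo_core W'); split; first exact: subgroup_endo_core.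
split; first exact: fully_invariant_endo_core.
split; [exists l | exists k].
  apply: quot_card_le_subl qW'H => _ [a [b [Ha [Fb ->]]]].
  by apply: subgroupD => //; [apply: sHW' | apply: endo_core_sub].
apply: quot_card_le_addr; first exact: subgroup_endo_core.
by apply: quot_card_le_subr qHX' => x X'x u; apply: mapX'.
Qed.
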